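(* Suppose users bid their true costs and let $\alpha\ge1$. Let $g_{avg}(\pi)$ denote the expected utility $\mathbb{E}_{\mathbf{Y}_{\mathcal{W}}}[g(\mathbf{y}_{\mathcal{S}})]$ of the set selected by an adaptive policy $\pi$, let $\pi_G$ be the allocation policy of \textsc{SeqGreedy} and $\pi_{TG}$ the allocation policy of \textsc{SeqTGreedy} with parameter $\alpha$ (both defined in the context). Then $g_{avg}(\pi_G)\le(1+\alpha)\,g_{avg}(\pi_{TG})+\alpha f_{\max}$.
   Context: Setting. $\mathcal{V}$ is a finite set and $f:2^{\mathcal{V}}\to\mathbb{R}_{\ge0}$ is monotone and submodular. $\mathcal{W}$ is a finite set of users and $\mathcal{O}\subseteq 2^{\mathcal{V}}$. Each user $w$ has a random sensing profile $Y_w$ with values in $\mathcal{O}$; the $Y_w$ are independent with known distributions. For $\mathcal{S}\subseteq\mathcal{W}$ and values $y_s$, write $\mathbf{y}_{\mathcal{S}}=\{(s,y_s):s\in\mathcal{S}\}$ and $g(\mathbf{y}_{\mathcal{S}})=f(\bigcup_{s\in\mathcal{S}}y_s)$. Each user's maximal contribution is bounded by $f_{\max}$: $g(\mathbf{y}_{\mathcal{S}}\cup\{(w,y)\})-g(\mathbf{y}_{\mathcal{S}})\le f_{\max}$ always. The conditional expected marginal gain is $\Delta_g(w\mid\mathbf{y}_{\mathcal{S}})=\sum_{y\in\mathcal{O}}P(Y_w=y\mid\mathbf{y}_{\mathcal{S}})\,[g(\mathbf{y}_{\mathcal{S}}\cup\{(w,y)\})-g(\mathbf{y}_{\mathcal{S}})]$.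 Each user $w$ has cost $c_w>0$ and bid $b_w=c_w$; budget $\mathcal{B}>0$. Allocation policy of \textsc{SeqTGreedy} (parameter $\alpha$). Set $\mathcal{S}=\emptyset$, $\mathbf{y}_{\mathcal{S}}=\emptyset$, $\mathcal{W}'=\mathcal{W}$. While $\mathcal{W}'\ne\emptyset$: let $w^*\in\arg\max_{w\in\mathcal{W}'}\Delta_g(w\mid\mathbf{y}_{\mathcal{S}})/b_w$ and $\Delta_{w^*}=\Delta_g(w^*\mid\mathbf{y}_{\mathcal{S}})$. If $\sum_{s\in\mathcal{S}}b_s+b_{w^*}\le\mathcal{B}$: if moreover $b_{w^*}\le\frac{\mathcal{B}}{\alpha}\cdot\frac{\Delta_{w^*}}{\sum_{s\in\mathcal{S}}\Delta_s+\Delta_{w^*}}$ then add $w^*$ to $\mathcal{S}$, observe the realization $y_{w^*}$ of $Y_{w^*}$, add $(w^*,y_{w^*})$ to $\mathbf{y}_{\mathcal{S}}$, remove $w^*$ from $\mathcal{W}'$; otherwise stop. If the budget test fails, remove $w^*$ from $\mathcal{W}'$. \textsc{SeqGreedy}: the same policy without the proportional-share test, i.e. repeatedly choose $w^*\in\arg\max\Delta_g(w\mid\mathbf{y}_{\mathcal{S}})/b_w$ among remaining users, select it (and observe its profile) if the total bid stays within $\mathcal{B}$, otherwise discard it. *)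

From mathcomp Require Import all_boot all_order all_algebra.
Set Implicit Arguments. Unset Strict Implicit. Unset Printing Implicit Defensive.
Import Order.TTheory GRing.Theory Num.Theory.
Local Open Scope ring_scope.

(* A full realization of the sensing profiles is phi : {ffun W -> {set V}},
   phi w being the realized profile Y_w of user w.  The profiles are
   independent with distributions p w, so the joint law is the product. *)
Definition jointP {V W : finType} {R : realFieldType}
  (p : W -> {set V} -> R) (phi : {ffun W -> {set V}}) : R :=
  \prod_(w : W) p w (phi w).

Definition agree {V W : finType} (S : {set W}) (phi psi : {ffun W -> {set V}}) : bool :=
  [forall s in S, psi s == phi s].

(* P(Y_w = y | y_S), where y_S = {(s, phi s) : s in S} *)
Definition condP {V W : finType} {R : realFieldType}
  (p : W -> {set V} -> R) (w : W) (y : {set V}) (S : {set W})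
  (phi : {ffun W -> {set V}}) : R :=
  (\sum_(psi | agree S phi psi && (psi w == y)) jointP p psi)
  / (\sum_(psi | agree S phi psi) jointP p psi).

Definition gval {V W : finType} {R : realFieldType} (f : {set V} -> R)
  (S : {set W}) (phi : {ffun W -> {set V}}) : R :=
  f (\bigcup_(s in S) phi s).

Definition Delta {V W : finType} {R : realFieldType} (f : {set V} -> R)
  (O : {set {set V}}) (p : W -> {set V} -> R) (w : W) (S : {set W})
  (phi : {ffun W -> {set V}}) : R :=
  \sum_(y in O) condP p w y S phi *
     (f ((\bigcup_(s in S) phi s) :|: y) - gval f S phi).

Definition monotone_set {V : finType} {R : realFieldType} (f : {set V} -> R) :=
  forall A B : {set V}, A \subset B -> f A <= f B.

Definition submodular_set {V : finType} {R : realFieldType} (f : {set V} -> R) :=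
  forall (A B : {set V}) (x : V), A \subset B -> x \notin B ->
    f (x |: B) - f B <= f (x |: A) - f A.

Definition argmax_rule {W : finType} {R : realFieldType}
  (choose : {set W} -> (W -> R) -> W) :=
  forall (A : {set W}) (F : W -> R), A != set0 ->
    choose A F \in A /\ (forall w, w \in A -> F w <= F (choose A F)).

(* SeqGreedy allocation: Wr = remaining candidates W', S = selected users.
   Runs with fuel (#|W| steps suffice since each step removes a candidate).
   Returns the selected set on realization phi (only profiles of selected
   users are ever used, so the policy is adaptive). *)
Fixpoint seqGreedy {V W : finType} {R : realFieldType} (f : {set V} -> R)
  (O : {set {set V}}) (p : W -> {set V} -> R) (b : W -> R) (B : R)
  (choose : {set W} -> (W -> R) -> W) (phi : {ffun W -> {set V}})
  (n : nat) (Wr S : {set W}) : {set W} :=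
  match n with
  | 0 => S
  | n'.+1 =>
    if Wr == set0 then S else
    let ws := choose Wr (fun w => Delta f O p w S phi / b w) in
    if \sum_(s in S) b s + b ws <= B
    then seqGreedy f O p b B choose phi n' (Wr :\ ws) (ws |: S)
    else seqGreedy f O p b B choose phi n' (Wr :\ ws) S
  end.

(* SeqTGreedy allocation with parameter alpha; D = sum of the Delta_s recorded
   for the already selected users s (Delta_s = value of Delta at selection). *)
Fixpoint seqTGreedy {V W : finType} {R : realFieldType} (f : {set V} -> R)
  (O : {set {set V}}) (p : W -> {set V} -> R) (b : W -> R) (B alpha : R)
  (choose : {set W} -> (W -> R) -> W) (phi : {ffun W -> {set V}})
  (n : nat) (Wr S : {set W}) (D : R) : {set W} :=
  match n with
  | 0 => S
  | n'.+1 =>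
    if Wr == set0 then S else
    let ws := choose Wr (fun w => Delta f O p w S phi / b w) in
    let dws := Delta f O p ws S phi in
    if \sum_(s in S) b s + b ws <= B then
      if b ws <= B / alpha * (dws / (D + dws))
      then seqTGreedy f O p b B alpha choose phi n' (Wr :\ ws) (ws |: S) (D + dws)
      else S
    else seqTGreedy f O p b B alpha choose phi n' (Wr :\ ws) S D
  end.

Definition gavg {V W : finType} {R : realFieldType} (f : {set V} -> R)
  (p : W -> {set V} -> R) (sel : {ffun W -> {set V}} -> {set W}) : R :=
  \sum_(phi : {ffun W -> {set V}}) jointP p phi * gval f (sel phi) phi.

(* Along either run, g(y_S) minus the sum of the Delta_g of the users selected so far is a
   martingale, Delta_g(w | y_S) being the conditional expectation of the increment of g when w
   joins; hence g_avg of each policy is f(empty) plus the expected sum of recorded Deltas.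
   Pathwise, the two policies make the same choices until SeqTGreedy stops at some w* with
   marginal gain d and ratio r = d / c_w*, the best one.  By submodularity every later ratio of
   SeqGreedy is at most r, so it collects at most r B afterwards, and the failed proportional-
   share test reads r B <= alpha (D + d) <= alpha (D + f_max), where D is SeqTGreedy's total.
   So SeqGreedy's total is at most (1 + alpha) D + alpha f_max. *)

From mathcomp Require Import all_boot all_order all_algebra.
From mathcomp Require Import ring lra.
From Stdlib Require Import FunctionalExtensionality.
Set Implicit Arguments. Unset Strict Implicit. Unset Printing Implicit Defensive.
Import Order.TTheory GRing.Theory Num.Theory.
Local Open Scope ring_scope.

Section JointLaw.
Variables (V W : finType) (R : realFieldType) (p : W -> {set V} -> R).
Hypothesis p_ge0 : forall w y, 0 <= p w y.
Hypothesis p_sum1 : forall w, \sum_(y : {set V}) p w y = 1.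

Local Notation jP := (jointP p).

Lemma jointP_ge0 (phi : {ffun W -> {set V}}) : 0 <= jP phi.
Proof. by apply: prodr_ge0 => w _; apply: p_ge0. Qed.

Lemma sum_jointP_forall (Q : W -> {set V} -> bool) :
  \sum_(psi : {ffun W -> {set V}} | [forall w, Q w (psi w)]) jP psi =
  \prod_w \sum_(y | Q w y) p w y.
Proof.
under eq_bigr => w _ do rewrite big_mkcond.
rewrite bigA_distr_bigA big_mkcond /=; apply: eq_bigr => psi _.
have [/forallP Qpsi|] := boolP [forall w, Q w (psi w)].
  by apply: eq_bigr => w _; rewrite Qpsi.
rewrite negb_forall => /existsP [w notQw].
by rewrite (bigD1 w) //= (negbTE notQw) mul0r.
Qed.

Lemma sum_jointP : \sum_(psi : {ffun W -> {set V}}) jP psi = 1.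
Proof.
have := sum_jointP_forall (fun _ _ => true).
under [RHS]eq_bigr => w _ do rewrite p_sum1.
rewrite big1_eq => <-; apply/eq_bigl => psi; exact/esym/forallP.
Qed.

Lemma jointP_le_sum_agree (S : {set W}) (phi : {ffun W -> {set V}}) :
  jP phi <= \sum_(psi | agree S phi psi) jP psi.
Proof.
rewrite (bigD1 phi) /=; last by apply/forallP => w; apply/implyP.
by rewrite lerDl; apply: sumr_ge0 => ? _; apply: jointP_ge0.
Qed.

(* Independence: fixing the profiles on [S] says nothing about [Y_w] for [w \notin S]. *)
Lemma sum_jointP_agree_at (S : {set W}) (phi : {ffun W -> {set V}}) w y :
  w \notin S ->
  \sum_(psi | agree S phi psi && (psi w == y)) jP psi =
  p w y * \sum_(psi | agree S phi psi) jP psi.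
Proof.
move=> wS.
pose Q x y' := ((x \in S) ==> (y' == phi x)) && ((x == w) ==> (y' == y)).
rewrite (eq_bigl (fun psi : {ffun W -> {set V}} => [forall x, Q x (psi x)])); last first.
  move=> psi; apply/andP/forallP => [[/forallP agreeS /eqP psiw] x|Qpsi].
    by rewrite /Q agreeS; apply/implyP => /eqP ->; apply/eqP.
  split; first by apply/forallP => x; case/andP: (Qpsi x).
  by case/andP: (Qpsi w); rewrite eqxx.
rewrite sum_jointP_forall (sum_jointP_forall (fun x y' => (x \in S) ==> (y' == phi x))).
rewrite (bigD1 w) //= [in RHS](bigD1 w) //= /Q (negbTE wS) eqxx /=.
rewrite big_pred1_eq p_sum1 mul1r; congr (_ * _).
by apply: eq_bigr => x xw; apply: eq_bigl => y'; rewrite (negbTE xw) andbT.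
Qed.

Lemma condP_ge0 w y (S : {set W}) (phi : {ffun W -> {set V}}) :
  0 <= condP p w y S phi.
Proof. by apply: divr_ge0; apply: sumr_ge0 => ? _; apply: jointP_ge0. Qed.

Lemma condP_notin w y (S : {set W}) (phi : {ffun W -> {set V}}) :
  0 < jP phi -> w \notin S -> condP p w y S phi = p w y.
Proof.
move=> phi_gt0 wS; rewrite /condP sum_jointP_agree_at // mulfK //.
by rewrite gt_eqF // (lt_le_trans phi_gt0) // jointP_le_sum_agree.
Qed.

End JointLaw.

Section Agree.
Variables (V W : finType).
Implicit Types (S : {set W}) (phi psi : {ffun W -> {set V}}).

Lemma agreeP S phi psi : agree S phi psi -> {in S, psi =1 phi}.
Proof. by move=> /forallP agreeS s sS; have := agreeS s; rewrite sS => /eqP. Qed.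

Lemma agree_refl S phi : agree S phi phi.
Proof. by apply/forallP => s; apply/implyP. Qed.

Lemma agree0 phi psi : agree set0 phi psi.
Proof. by apply/forallP => s; rewrite in_set0. Qed.

Lemma agree_eq S phi psi : agree S phi psi -> agree S psi =1 agree S phi.
Proof.
move=> /agreeP agreeS x; apply: eq_forallb => s.
by case sS: (s \in S) => //=; rewrite agreeS.
Qed.

Lemma bigcup_agree S phi psi :
  agree S phi psi -> \bigcup_(s in S) psi s = \bigcup_(s in S) phi s.
Proof. by move=> /agreeP agreeS; apply: eq_bigr => s /agreeS ->. Qed.

Definition fupd phi (w : W) (y : {set V}) : {ffun W -> {set V}} :=
  [ffun x => if x == w then y else phi x].

Lemma agree_fupd S phi w y psi : w \notin S ->
  agree (w |: S) (fupd phi w y) psi = agree S phi psi && (psi w == y).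
Proof.
move=> wS; apply/forallP/andP => [agreeSw|[/forallP agreeS psiw] s].
  split; last by have := agreeSw w; rewrite setU11 ffunE eqxx.
  apply/forallP => s; apply/implyP => sS.
  have sw : (s == w) = false by apply: contraNF wS => /eqP <-.
  by have := agreeSw s; rewrite in_setU1 sS orbT ffunE sw.
by rewrite in_setU1 ffunE; case: eqP => [->|_] //=; apply: agreeS.
Qed.

Lemma bigcup_fupd S phi w y : w \notin S ->
  \bigcup_(s in w |: S) fupd phi w y s = (\bigcup_(s in S) phi s) :|: y.
Proof.
move=> wS; rewrite big_setU1 //= ffunE eqxx setUC; congr (_ :|: _).
apply: eq_bigr => s sS; rewrite ffunE.
by have -> : (s == w) = false by apply: contraNF wS => /eqP <-.
Qed.

Lemma sum_agree_fupd {M : nmodType} S phi w (F : {ffun W -> {set V}} -> M) : w \notin S ->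
  \sum_(psi | agree S phi psi) F psi =
  \sum_(y : {set V}) \sum_(psi | agree (w |: S) (fupd phi w y) psi) F psi.
Proof.
move=> wS; rewrite (partition_big (fun psi : {ffun W -> {set V}} => psi w) predT) //.
by apply: eq_bigr => y _; apply: eq_bigl => psi; rewrite agree_fupd.
Qed.

Lemma disjoint_setD1U1 (Wr S : {set W}) x :
  [disjoint Wr & S] -> [disjoint Wr :\ x & x |: S].
Proof.
move=> WrS; rewrite -setI_eq0; apply/eqP/setP => y; rewrite !inE.
case: eqP => //= _; apply/negbTE/andP => -[yWr yS].
by rewrite (disjointFr WrS yWr) in yS.
Qed.

End Agree.

Section Delta.
Variables (V W : finType) (R : realFieldType) (f : {set V} -> R)
  (O : {set {set V}}) (p : W -> {set V} -> R) (fmax : R).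
Hypothesis f_mono : monotone_set f.
Hypothesis f_sub : submodular_set f.
Hypothesis p_ge0 : forall w y, 0 <= p w y.
Hypothesis p_sum1 : forall w, \sum_(y : {set V}) p w y = 1.
Hypothesis p_O : forall w y, y \notin O -> p w y = 0.
Hypothesis fmaxP : forall (S : {set W}) (phi : W -> {set V}) (y : {set V}),
  (forall s, phi s \in O) -> y \in O ->
  f ((\bigcup_(s in S) phi s) :|: y) - f (\bigcup_(s in S) phi s) <= fmax.

Local Notation jP := (jointP p).
Local Notation Dl := (Delta f O p).
Implicit Types (S : {set W}) (phi psi : {ffun W -> {set V}}).

Lemma submodular_setU (A B Y : {set V}) : A \subset B ->
  f (B :|: Y) - f B <= f (A :|: Y) - f A.
Proof.
move=> AB; rewrite -[Y]set_enum; elim: (enum Y) => [|x s IH].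
  by rewrite (_ : [set x in [::]] = set0) ?setU0 ?subrr //; apply/setP => x.
set T := [set x in s] in IH *.
have -> : [set y in x :: s] = x |: T by apply/setP => y; rewrite !inE.
rewrite ![_ :|: (x |: T)]setUCA.
have step : f (x |: (B :|: T)) - f (B :|: T) <= f (x |: (A :|: T)) - f (A :|: T).
  have [xBT|xBT] := boolP (x \in B :|: T).
    rewrite (setUidPr _) ?sub1set // subrr subr_ge0; apply: f_mono; exact: subsetUr.
  by apply: f_sub => //; apply: setSU.
lra.
Qed.

Lemma gval_agree S phi psi : agree S phi psi -> gval f S psi = gval f S phi.
Proof. by move=> agreeS; rewrite /gval (bigcup_agree agreeS). Qed.

Lemma Delta_agree S phi psi w : agree S phi psi -> Dl w S psi = Dl w S phi.
Proof.
move=> agreeS; rewrite /Delta /gval (bigcup_agree agreeS).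
apply: eq_bigr => y _; rewrite /condP.
by congr (_ / _ * _); apply: eq_bigl => x; rewrite (agree_eq agreeS).
Qed.

Lemma Delta_mem S phi w : w \in S -> Dl w S phi = 0.
Proof.
move=> wS; rewrite /Delta big1 // => y _.
have [->|ne] := eqVneq y (phi w).
  by rewrite /gval (setUidPl (bigcup_sup w wS)) subrr mulr0.
rewrite /condP big1 ?mul0r // => psi /andP [/agreeP agreeS /eqP psiw].
by move: ne; rewrite -psiw agreeS ?eqxx.
Qed.

Lemma Delta_ge0 S phi w : 0 <= Dl w S phi.
Proof.
apply: sumr_ge0 => y _; apply: mulr_ge0; first exact: condP_ge0.
by rewrite subr_ge0; apply: f_mono; apply: subsetUl.
Qed.

Lemma Delta_notin S phi w : 0 < jP phi -> w \notin S ->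
  Dl w S phi = \sum_(y in O) p w y *
    (f ((\bigcup_(s in S) phi s) :|: y) - f (\bigcup_(s in S) phi s)).
Proof. by move=> phi_gt0 wS; apply: eq_bigr => y _; rewrite condP_notin. Qed.

Lemma sum_p_O w : \sum_(y in O) p w y = 1.
Proof.
rewrite -(p_sum1 w) [RHS](bigID (mem O)) /= [X in _ + X]big1 ?addr0 //.
exact: p_O.
Qed.

Lemma jointP_gt0_O phi : 0 < jP phi -> forall w, phi w \in O.
Proof.
move=> phi_gt0 w; apply: contraTT phi_gt0 => phiwO.
by rewrite /jointP (bigD1 w) //= p_O // mul0r ltxx.
Qed.

Lemma fmax_ge0 (w : W) : 0 <= fmax.
Proof.
have [O0|[y yO]] := set_0Vmem O.
  by have := sum_p_O w; rewrite O0 big_set0 => /eqP; rewrite eq_sym oner_eq0.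
apply: le_trans (@fmaxP set0 (fun=> y) y (fun=> yO) yO).
by rewrite subr_ge0; apply: f_mono; apply: subsetUl.
Qed.

Lemma Delta_le_fmax S phi w : 0 < jP phi -> Dl w S phi <= fmax.
Proof.
move=> phi_gt0; have [wS|wS] := boolP (w \in S).
  by rewrite Delta_mem // (fmax_ge0 w).
rewrite Delta_notin // -[fmax]mul1r -(sum_p_O w) mulr_suml.
apply: ler_sum => y yO; apply: ler_wpM2l => //.
exact: (@fmaxP S phi y (jointP_gt0_O phi_gt0)).
Qed.

Lemma Delta_le_subset S S' phi w :
  S \subset S' -> 0 < jP phi -> Dl w S' phi <= Dl w S phi.
Proof.
move=> SS' phi_gt0; have [wS'|wS'] := boolP (w \in S').
  by rewrite Delta_mem // Delta_ge0.
have wS : w \notin S by apply: contra wS'; apply: (subsetP SS').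
rewrite !Delta_notin //; apply: ler_sum => y _; apply: ler_wpM2l => //.
apply: submodular_setU; apply/bigcupsP => s sS.
by apply: bigcup_sup; apply: (subsetP SS').
Qed.

Lemma sum_agree_increment S phi w :
  \sum_(psi | agree S phi psi) jP psi *
     (f ((\bigcup_(s in S) phi s) :|: psi w) - gval f S phi)
  = Dl w S phi * \sum_(psi | agree S phi psi) jP psi.
Proof.
set Z := \sum_(psi | agree S phi psi) jP psi.
rewrite (partition_big (fun psi : {ffun W -> {set V}} => psi w) predT) //=.
under eq_bigr => y _.
  rewrite (eq_bigr (fun psi => jP psi *
    (f ((\bigcup_(s in S) phi s) :|: y) - gval f S phi))); last first.
    by move=> psi /andP [_ /eqP ->].
  rewrite -big_distrl /=.
over.
rewrite (bigID (mem O)) /= [X in _ + X]big1 ?addr0; last first.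
  move=> y yO; rewrite big1 ?mul0r // => psi /andP [_ /eqP psiw].
  by rewrite /jointP (bigD1 w) //= psiw p_O // mul0r.
have [Z0|Z0] := eqVneq Z 0.
  rewrite Z0 mulr0 big1 // => y _; rewrite big1 ?mul0r // => psi /andP [agreeS _].
  by apply: (psumr_eq0P _ Z0) => // ? _; apply: jointP_ge0.
rewrite /Delta big_distrl /=; apply: eq_bigr => y _.
by rewrite /condP -/Z mulrAC divfK.
Qed.

End Delta.

Section Runs.
Variables (V W : finType) (R : realFieldType) (f : {set V} -> R)
  (O : {set {set V}}) (p : W -> {set V} -> R) (c : W -> R) (B alpha fmax : R)
  (choose : {set W} -> (W -> R) -> W).
Hypothesis f_ge0 : forall A : {set V}, 0 <= f A.
Hypothesis f_mono : monotone_set f.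
Hypothesis f_sub : submodular_set f.
Hypothesis p_ge0 : forall w y, 0 <= p w y.
Hypothesis p_sum1 : forall w, \sum_(y : {set V}) p w y = 1.
Hypothesis p_O : forall w y, y \notin O -> p w y = 0.
Hypothesis fmaxP : forall (S : {set W}) (phi : W -> {set V}) (y : {set V}),
  (forall s, phi s \in O) -> y \in O ->
  f ((\bigcup_(s in S) phi s) :|: y) - f (\bigcup_(s in S) phi s) <= fmax.
Hypothesis c_gt0 : forall w, 0 < c w.
Hypothesis alpha_ge1 : 1 <= alpha.
Hypothesis chooseP : argmax_rule choose.

Local Notation jP := (jointP p).
Local Notation Dl := (Delta f O p).
Local Notation cost S := (\sum_(s in S) c s).
Local Notation pick Wr S phi := (choose Wr (fun w => Dl w S phi / c w)).
Local Notation sG := (seqGreedy f O p c B choose).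
Local Notation sT := (seqTGreedy f O p c B alpha choose).
Implicit Types (Wr S : {set W}) (phi psi : {ffun W -> {set V}}).

Lemma alpha_gt0 : 0 < alpha.
Proof. exact: lt_le_trans ltr01 alpha_ge1. Qed.

Lemma pickP Wr S phi : Wr != set0 ->
  pick Wr S phi \in Wr /\
  forall w, w \in Wr -> Dl w S phi / c w <= Dl (pick Wr S phi) S phi / c (pick Wr S phi).
Proof. exact: chooseP. Qed.

Lemma pick_agree Wr S phi psi : agree S phi psi -> pick Wr S psi = pick Wr S phi.
Proof.
move=> agreeS; congr (choose Wr _); apply: functional_extensionality => w.
by rewrite (Delta_agree _ _ _ _ agreeS).
Qed.

(* The compensators of [g] along the two runs on [phi]: the sums of the [Delta]s of the
   selected users, so that [g] minus the gain is a martingale. *)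
Fixpoint seqGreedy_gain phi (n : nat) Wr S (a : R) : R :=
  match n with
  | 0 => a
  | n'.+1 =>
    if Wr == set0 then a else
    let ws := pick Wr S phi in
    if cost S + c ws <= B
    then seqGreedy_gain phi n' (Wr :\ ws) (ws |: S) (a + Dl ws S phi)
    else seqGreedy_gain phi n' (Wr :\ ws) S a
  end.

Fixpoint seqTGreedy_gain phi (n : nat) Wr S (D : R) : R :=
  match n with
  | 0 => D
  | n'.+1 =>
    if Wr == set0 then D else
    let ws := pick Wr S phi in
    let dws := Dl ws S phi in
    if cost S + c ws <= B then
      if c ws <= B / alpha * (dws / (D + dws))
      then seqTGreedy_gain phi n' (Wr :\ ws) (ws |: S) (D + dws)
      else D
    else seqTGreedy_gain phi n' (Wr :\ ws) S D
  end.

Local Notation gG := seqGreedy_gain.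
Local Notation gT := seqTGreedy_gain.

Section Step.
Variables (n : nat) (Wr S : {set W}) (phi psi : {ffun W -> {set V}}) (a : R).
Hypothesis agreeS : agree S phi psi.
Hypothesis Wr_neq0 : Wr != set0.
Let ws := pick Wr S phi.
Let d := Dl ws S phi.

Lemma seqGreedy_select : cost S + c ws <= B ->
  sG psi n.+1 Wr S = sG psi n (Wr :\ ws) (ws |: S) /\
  gG psi n.+1 Wr S a = gG psi n (Wr :\ ws) (ws |: S) (a + d).
Proof.
by move=> budget; rewrite /= (negbTE Wr_neq0) (pick_agree Wr agreeS) -/ws
  (Delta_agree _ _ _ _ agreeS) budget.
Qed.

Lemma seqGreedy_skip : ~~ (cost S + c ws <= B) ->
  sG psi n.+1 Wr S = sG psi n (Wr :\ ws) S /\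
  gG psi n.+1 Wr S a = gG psi n (Wr :\ ws) S a.
Proof.
by move=> budget; rewrite /= (negbTE Wr_neq0) (pick_agree Wr agreeS) -/ws (negbTE budget).
Qed.

Lemma seqTGreedy_select : cost S + c ws <= B -> c ws <= B / alpha * (d / (a + d)) ->
  sT psi n.+1 Wr S a = sT psi n (Wr :\ ws) (ws |: S) (a + d) /\
  gT psi n.+1 Wr S a = gT psi n (Wr :\ ws) (ws |: S) (a + d).
Proof.
by move=> budget share; rewrite /= (negbTE Wr_neq0) (pick_agree Wr agreeS) -/ws
  (Delta_agree _ _ _ _ agreeS) budget -/d share.
Qed.

Lemma seqTGreedy_stop : cost S + c ws <= B -> ~~ (c ws <= B / alpha * (d / (a + d))) ->
  sT psi n.+1 Wr S a = S /\ gT psi n.+1 Wr S a = a.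
Proof.
by move=> budget share; rewrite /= (negbTE Wr_neq0) (pick_agree Wr agreeS) -/ws
  (Delta_agree _ _ _ _ agreeS) budget -/d (negbTE share).
Qed.

Lemma seqTGreedy_skip : ~~ (cost S + c ws <= B) ->
  sT psi n.+1 Wr S a = sT psi n (Wr :\ ws) S a /\
  gT psi n.+1 Wr S a = gT psi n (Wr :\ ws) S a.
Proof.
by move=> budget; rewrite /= (negbTE Wr_neq0) (pick_agree Wr agreeS) -/ws (negbTE budget).
Qed.

End Step.

Lemma martingale_step S phi ws (a : R) (X : {ffun W -> {set V}} -> R) : ws \notin S ->
  (forall y, \sum_(psi | agree (ws |: S) (fupd phi ws y) psi) jP psi * X psi =
             \sum_(psi | agree (ws |: S) (fupd phi ws y) psi)
                jP psi * (gval f (ws |: S) (fupd phi ws y) - (a + Dl ws S phi))) ->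
  \sum_(psi | agree S phi psi) jP psi * X psi =
  \sum_(psi | agree S phi psi) jP psi * (gval f S phi - a).
Proof.
move=> wsS refined; set U := \bigcup_(s in S) phi s.
transitivity (\sum_(psi | agree S phi psi) jP psi * (f (U :|: psi ws) - (a + Dl ws S phi))).
  rewrite (sum_agree_fupd _ _ wsS) [RHS](sum_agree_fupd _ _ wsS).
  apply: eq_bigr => y _; rewrite refined /gval bigcup_fupd //.
  by apply: eq_bigr => psi; rewrite agree_fupd // => /andP [_ /eqP ->].
rewrite (eq_bigr (fun psi => jP psi * (f (U :|: psi ws) - gval f S phi) +
           (jP psi * (gval f S phi - a) - Dl ws S phi * jP psi))); last first.
  by move=> psi _; ring.
by rewrite big_split /= (sum_agree_increment f p_ge0 p_O) sumrB -mulr_sumr addrC subrK.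
Qed.

Lemma seqGreedy_martingale n : forall Wr S (a : R) phi, [disjoint Wr & S] ->
  \sum_(psi | agree S phi psi) jP psi * (gval f (sG psi n Wr S) psi - gG psi n Wr S a)
  = \sum_(psi | agree S phi psi) jP psi * (gval f S phi - a).
Proof.
elim: n => [|n IH] Wr S a phi WrS.
  by apply: eq_bigr => psi agreeS /=; rewrite (gval_agree f agreeS).
have [->|Wr_neq0] := eqVneq Wr set0.
  by apply: eq_bigr => psi agreeS /=; rewrite eqxx (gval_agree f agreeS).
have [wsWr _] := pickP S phi Wr_neq0.
set ws := pick Wr S phi in wsWr *.
have wsS : ws \notin S by rewrite (disjointFr WrS wsWr).
have [budget|budget] := boolP (cost S + c ws <= B).
  pose X psi := gval f (sG psi n (Wr :\ ws) (ws |: S)) psi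
                - gG psi n (Wr :\ ws) (ws |: S) (a + Dl ws S phi).
  rewrite (eq_bigr (fun psi => jP psi * X psi)); last first.
    by move=> psi agreeS; have [-> ->] := seqGreedy_select n a agreeS Wr_neq0 budget.
  by apply: (martingale_step wsS) => y; apply: IH; apply: disjoint_setD1U1.
rewrite (eq_bigr (fun psi => jP psi * (gval f (sG psi n (Wr :\ ws) S) psi
    - gG psi n (Wr :\ ws) S a))); last first.
  by move=> psi agreeS; have [-> ->] := seqGreedy_skip n a agreeS Wr_neq0 budget.
by apply: IH; apply: disjointWl WrS; apply: subsetDl.
Qed.

Lemma seqTGreedy_martingale n : forall Wr S (D : R) phi, [disjoint Wr & S] ->
  \sum_(psi | agree S phi psi) jP psi * (gval f (sT psi n Wr S D) psi - gT psi n Wr S D)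
  = \sum_(psi | agree S phi psi) jP psi * (gval f S phi - D).
Proof.
elim: n => [|n IH] Wr S D phi WrS.
  by apply: eq_bigr => psi agreeS /=; rewrite (gval_agree f agreeS).
have [->|Wr_neq0] := eqVneq Wr set0.
  by apply: eq_bigr => psi agreeS /=; rewrite eqxx (gval_agree f agreeS).
have [wsWr _] := pickP S phi Wr_neq0.
set ws := pick Wr S phi in wsWr *.
have wsS : ws \notin S by rewrite (disjointFr WrS wsWr).
set d := Dl ws S phi.
have [budget|budget] := boolP (cost S + c ws <= B).
  have [share|share] := boolP (c ws <= B / alpha * (d / (D + d))).
    pose X psi := gval f (sT psi n (Wr :\ ws) (ws |: S) (D + d)) psi
                  - gT psi n (Wr :\ ws) (ws |: S) (D + d).
    rewrite (eq_bigr (fun psi => jP psi * X psi)); last first.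
      by move=> psi agreeS; have [-> ->] := seqTGreedy_select n agreeS Wr_neq0 budget share.
    by apply: (martingale_step wsS) => y; apply: IH; apply: disjoint_setD1U1.
  apply: eq_bigr => psi agreeS.
  by have [-> ->] := seqTGreedy_stop n agreeS Wr_neq0 budget share; rewrite (gval_agree f agreeS).
rewrite (eq_bigr (fun psi => jP psi * (gval f (sT psi n (Wr :\ ws) S D) psi
    - gT psi n (Wr :\ ws) S D))); last first.
  by move=> psi agreeS; have [-> ->] := seqTGreedy_skip n D agreeS Wr_neq0 budget.
by apply: IH; apply: disjointWl WrS; apply: subsetDl.
Qed.

Lemma expectation_of_martingale (X Y : {ffun W -> {set V}} -> R) :
  (forall phi, \sum_(psi | agree set0 phi psi) jP psi * (X psi - Y psi)
               = \sum_(psi | agree set0 phi psi) jP psi * (gval f set0 phi - 0)) ->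
  \sum_psi jP psi * X psi = f set0 + \sum_psi jP psi * Y psi.
Proof.
move=> /(_ [ffun=> set0]); rewrite !(eq_bigl _ _ (agree0 _)) subr0 -big_distrl /=.
rewrite sum_jointP // mul1r /gval big_set0 => <-.
by rewrite -big_split; apply: eq_bigr => psi _; rewrite /= -mulrDr subrK.
Qed.

Lemma cost_ge0 S : 0 <= cost S.
Proof. by apply: sumr_ge0 => s _; apply: ltW. Qed.

Lemma ratio_bound_select phi Wr S ws (r : R) : 0 < jP phi ->
  (forall w, w \in Wr -> Dl w S phi / c w <= r) ->
  forall w, w \in Wr :\ ws -> Dl w (ws |: S) phi / c w <= r.
Proof.
move=> phi_gt0 ratio_le w /setD1P [_ wWr]; apply: le_trans (ratio_le w wWr).
rewrite ler_pM2r ?invr_gt0 //; apply: Delta_le_subset => //; exact: subsetUr.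
Qed.

(* Submodularity keeps every later ratio below [r], so the remaining budget bounds the gain. *)
Lemma seqGreedy_gain_le phi n : 0 < jP phi -> forall Wr S (a r : R),
  [disjoint Wr & S] -> cost S <= B -> 0 <= r ->
  (forall w, w \in Wr -> Dl w S phi / c w <= r) ->
  gG phi n Wr S a - a <= r * (B - cost S).
Proof.
move=> phi_gt0; elim: n => [|n IH] Wr S a r WrS budgetS r_ge0 ratio_le.
  by rewrite /= subrr mulr_ge0 // subr_ge0.
have [->|Wr_neq0] := eqVneq Wr set0.
  by rewrite /= eqxx subrr mulr_ge0 // subr_ge0.
have [wsWr _] := pickP S phi Wr_neq0.
set ws := pick Wr S phi in wsWr *.
have wsS : ws \notin S by rewrite (disjointFr WrS wsWr).
have [budget|budget] := boolP (cost S + c ws <= B).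
  have [_ ->] := seqGreedy_select n a (agree_refl S phi) Wr_neq0 budget; rewrite -/ws.
  have Dws_le : Dl ws S phi <= r * c ws by rewrite -ler_pdivrMr // ratio_le.
  have := IH (Wr :\ ws) (ws |: S) (a + Dl ws S phi) r (disjoint_setD1U1 ws WrS).
  rewrite big_setU1 //= addrC => /(_ budget r_ge0 (ratio_bound_select phi_gt0 ratio_le)).
  rewrite !mulrBr mulrDr; lra.
have [_ ->] := seqGreedy_skip n a (agree_refl S phi) Wr_neq0 budget.
apply: IH => //; first by apply: disjointWl WrS; apply: subsetDl.
by move=> w /setD1P [_ /ratio_le].
Qed.

Lemma share_test_failed (D d cw : R) : 0 <= D -> 0 <= d -> 0 < cw ->
  ~~ (cw <= B / alpha * (d / (D + d))) -> B * (d / cw) <= alpha * (D + d).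
Proof.
move=> D_ge0 d_ge0 cw_gt0; rewrite -ltNge => share_lt.
have [->|d_neq0] := eqVneq d 0.
  by rewrite mul0r mulr0 addr0 mulr_ge0 // ltW // alpha_gt0.
have Dd_gt0 : 0 < D + d by rewrite ltr_wpDl // lt_def d_neq0.
have {}share_lt : B * d < cw * (alpha * (D + d)).
  rewrite -ltr_pdivrMr ?mulr_gt0 ?alpha_gt0 //; congr (_ < _): share_lt.
  by field; rewrite !gt_eqF ?alpha_gt0.
rewrite mulrA ler_pdivrMr // [_ * cw]mulrC; exact: ltW.
Qed.

(* When SeqTGreedy stops at [ws], the proportional-share test bounds what SeqGreedy can still
   collect: [ws] has the best ratio [r] and the failed test says [r * B <= alpha * (D + d)]. *)
Lemma seqGreedy_gain_after_stop phi n Wr S ws (a D : R) :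
  0 < jP phi -> [disjoint Wr & S] -> ws \in Wr ->
  (forall w, w \in Wr -> Dl w S phi / c w <= Dl ws S phi / c ws) -> 0 <= D ->
  cost S + c ws <= B -> ~~ (c ws <= B / alpha * (Dl ws S phi / (D + Dl ws S phi))) ->
  gG phi n (Wr :\ ws) (ws |: S) (a + Dl ws S phi) - a <= alpha * (D + fmax).
Proof.
move=> phi_gt0 WrS wsWr ratio_le D_ge0 budget share.
have wsS : ws \notin S by rewrite (disjointFr WrS wsWr).
set d := Dl ws S phi in ratio_le share *; set r := d / c ws in ratio_le.
have d_ge0 : 0 <= d := Delta_ge0 O f_mono p_ge0 S phi ws.
have r_ge0 : 0 <= r by rewrite divr_ge0 // ltW.
have d_le : d <= fmax := Delta_le_fmax f_mono p_ge0 p_sum1 p_O fmaxP S ws phi_gt0.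
have rB_le : r * B <= alpha * (D + d) by rewrite mulrC share_test_failed.
have := seqGreedy_gain_le n phi_gt0 (a + d) (disjoint_setD1U1 ws WrS).
rewrite big_setU1 //= addrC => /(_ r budget r_ge0 (ratio_bound_select phi_gt0 ratio_le)).
have -> : d = r * c ws by rewrite /r divfK // gt_eqF.
have := mulr_ge0 r_ge0 (cost_ge0 S); have := ler_wpM2l (ltW alpha_gt0) d_le.
rewrite mulrBr mulrDr !mulrDr; lra.
Qed.

(* Both policies make the same choices until SeqTGreedy stops; up to that point SeqTGreedy's
   gain [D] grows with SeqGreedy's, and [alpha * D] pays for what SeqGreedy collects after. *)
Lemma seqGreedy_gain_le_seqTGreedy_gain phi n : 0 < jP phi -> 0 <= fmax ->
  forall Wr S (a D : R), [disjoint Wr & S] -> 0 <= D ->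
  gG phi n Wr S a - a <= (1 + alpha) * (gT phi n Wr S D - D) + alpha * (D + fmax).
Proof.
move=> phi_gt0 fmax_ge0; have alpha_ge0 := ltW alpha_gt0.
elim: n => [|n IH] Wr S a D WrS D_ge0.
  by rewrite /= !subrr mulr0 add0r mulr_ge0 ?addr_ge0.
have [->|Wr_neq0] := eqVneq Wr set0.
  by rewrite /= eqxx !subrr mulr0 add0r mulr_ge0 ?addr_ge0.
have [wsWr ratio_le] := pickP S phi Wr_neq0.
set ws := pick Wr S phi in wsWr ratio_le *.
have wsS : ws \notin S by rewrite (disjointFr WrS wsWr).
set d := Dl ws S phi in ratio_le *.
have d_ge0 : 0 <= d := Delta_ge0 O f_mono p_ge0 S phi ws.
have [budget|budget] := boolP (cost S + c ws <= B); last first.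
  have [_ ->] := seqGreedy_skip n a (agree_refl S phi) Wr_neq0 budget.
  have [_ ->] := seqTGreedy_skip n D (agree_refl S phi) Wr_neq0 budget.
  by apply: IH => //; apply: disjointWl WrS; apply: subsetDl.
have [_ ->] := seqGreedy_select n a (agree_refl S phi) Wr_neq0 budget; rewrite -/ws -/d.
have [share|share] := boolP (c ws <= B / alpha * (d / (D + d))); last first.
  have [_ ->] := seqTGreedy_stop n (agree_refl S phi) Wr_neq0 budget share.
  rewrite subrr mulr0 add0r.
  exact: seqGreedy_gain_after_stop phi_gt0 WrS wsWr ratio_le D_ge0 budget share.
have [_ ->] := seqTGreedy_select n (agree_refl S phi) Wr_neq0 budget share; rewrite -/ws -/d.
have := IH (Wr :\ ws) (ws |: S) (a + d) (D + d) (disjoint_setD1U1 ws WrS) (addr_ge0 D_ge0 d_ge0).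
rewrite !mulrDr ?mulrBr !mulrDl !mul1r; lra.
Qed.

Lemma disjoint_setT0 : [disjoint [set: W] & set0].
Proof. by rewrite -setI_eq0 setI0. Qed.

Lemma gavg_seqGreedy :
  gavg f p (fun phi => sG phi #|W| [set: W] set0)
  = f set0 + \sum_phi jP phi * gG phi #|W| [set: W] set0 0.
Proof.
apply: expectation_of_martingale => phi.
by apply: seqGreedy_martingale; exact: disjoint_setT0.
Qed.

Lemma gavg_seqTGreedy :
  gavg f p (fun phi => sT phi #|W| [set: W] set0 0)
  = f set0 + \sum_phi jP phi * gT phi #|W| [set: W] set0 0.
Proof.
apply: expectation_of_martingale => phi.
by apply: seqTGreedy_martingale; exact: disjoint_setT0.
Qed.

Lemma gavg_seqGreedy_le :
  gavg f p (fun phi => sG phi #|W| [set: W] set0)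
  <= (1 + alpha) * gavg f p (fun phi => sT phi #|W| [set: W] set0 0) + alpha * fmax.
Proof.
(* [choose set0 _] is an inhabitant of [W], without which [fmax] would be unconstrained. *)
have fmax_ge0 := fmax_ge0 f_mono p_sum1 p_O fmaxP (choose set0 (fun=> 0)).
have pathwise phi : jP phi * gG phi #|W| [set: W] set0 0
    <= jP phi * ((1 + alpha) * gT phi #|W| [set: W] set0 0 + alpha * fmax).
  have := jointP_ge0 p_ge0 phi; rewrite le_eqVlt => /predU1P [<-|phi_gt0].
    by rewrite !mul0r.
  apply: ler_wpM2l; first exact: ltW.
  have := seqGreedy_gain_le_seqTGreedy_gain #|W| phi_gt0 fmax_ge0 0 (disjoint_setT0) (lexx 0).
  by rewrite !subr0 add0r.
have expected_le : \sum_phi jP phi * gG phi #|W| [set: W] set0 0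
    <= (1 + alpha) * \sum_phi jP phi * gT phi #|W| [set: W] set0 0 + alpha * fmax.
  apply: le_trans (ler_sum _ (fun phi _ => pathwise phi)) _.
  under eq_bigr => phi _ do rewrite mulrDr mulrCA.
  by rewrite big_split /= -!mulr_sumr -mulr_suml sum_jointP // mul1r.
rewrite gavg_seqGreedy gavg_seqTGreedy.
have := mulr_ge0 (ltW alpha_gt0) (f_ge0 set0).
rewrite mulrDr mulrDl mul1r; lra.
Qed.

End Runs.

Theorem lemma7 (V W : finType) (R : realFieldType)
  (f : {set V} -> R) (O : {set {set V}}) (p : W -> {set V} -> R)
  (c : W -> R) (B alpha fmax : R) (choose : {set W} -> (W -> R) -> W) :
  (forall A : {set V}, 0 <= f A) ->
  monotone_set f -> submodular_set f ->
  (forall w y, 0 <= p w y) ->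
  (forall w, \sum_(y : {set V}) p w y = 1) ->
  (forall w y, y \notin O -> p w y = 0) ->
  (forall (S : {set W}) (phi : W -> {set V}) (y : {set V}),
     (forall s, phi s \in O) -> y \in O ->
     f ((\bigcup_(s in S) phi s) :|: y) - f (\bigcup_(s in S) phi s) <= fmax) ->
  (forall w, 0 < c w) -> 0 < B -> 1 <= alpha ->
  argmax_rule choose ->
  (* users bid their true costs: b = c *)
  gavg f p (fun phi => seqGreedy f O p c B choose phi #|W| [set: W] set0)
  <= (1 + alpha) *
       gavg f p (fun phi => seqTGreedy f O p c B alpha choose phi #|W| [set: W] set0 0)
     + alpha * fmax.
Proof.
move=> f_ge0 f_mono f_sub p_ge0 p_sum1 p_O fmaxP c_gt0 _ alpha_ge1 chooseP.
exact: gavg_seqGreedy_le.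
Qed.
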